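(* Let $K$ be a $d$-dimensional convex body with $o\in\mathrm{int}(K)$, let $\delta>0$, and let $\{v_i+\lambda_iK: i\in I\}$ be a pairwise intersecting family of positive homothets of $K$ such that $v_i\notin v_j+\lambda_j\,\mathrm{int}(K)$ for all distinct $i,j\in I$, and $\lambda_i\in[1,1+\delta)$ for each $i\in I$. Then $|I|\le P(K,2(1+\delta))$.
   Context: A convex body is a compact convex set with non-empty interior. For a convex body $L$ with $o\in\mathrm{int}(L)$, $\|x\|_L=\inf\{\mu>0:x\in\mu L\}$. $P(K,\lambda)$ is the maximum number of points $p_1,\dots,p_m$ such that $\max_{i<j}\|p_i-p_j\|_{\frac12(K-K)}\big/\min_{i<j}\|p_i-p_j\|_{K\cap-K}\le\lambda$. *)

From HB Require Import structures.
From mathcomp Require Import all_boot all_order all_algebra.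
From mathcomp Require Import all_classical all_reals all_analysis.
Set Implicit Arguments. Unset Strict Implicit. Unset Printing Implicit Defensive.
Import Order.TTheory GRing.Theory Num.Theory.
Import numFieldNormedType.Exports.
Local Open Scope classical_set_scope.
Local Open Scope ring_scope.

Definition convexS {R : realType} {d : nat} (K : set 'rV[R]_d) :=
  forall x y (t : R), K x -> K y -> 0 <= t -> t <= 1 ->
    K (t *: x + (1 - t) *: y).

Definition convex_body {R : realType} {d : nat} (K : set 'rV[R]_d) :=
  [/\ compact K, convexS K & interior K !=set0].

Definition gauge {R : realType} {d : nat} (L : set 'rV[R]_d) (x : 'rV[R]_d) : R :=
  inf [set mu : R | 0 < mu /\ exists2 y, L y & x = mu *: y].

Definition half_diff {R : realType} {d : nat} (K : set 'rV[R]_d) : set 'rV[R]_d :=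
  [set z | exists a b, [/\ K a, K b & z = 2^-1 *: (a - b)]].

Definition sym_part {R : realType} {d : nat} (K : set 'rV[R]_d) : set 'rV[R]_d :=
  [set z | K z /\ K (- z)].

(* p_1..p_m (pairwise distinct) with
   max_{i<j} ||p_i-p_j||_{(K-K)/2} / min_{i<j} ||p_i-p_j||_{K ∩ -K} <= lambda,
   written as: every distance of the first kind is <= lambda times every
   distance of the second kind (equivalent for m >= 2; vacuous for m <= 1). *)
Definition P_config {R : realType} {d : nat} (K : set 'rV[R]_d) (lambda : R)
    (m : nat) (p : 'I_m -> 'rV[R]_d) :=
  injective p /\
  forall i j k l : 'I_m, i != j -> k != l ->
    gauge (half_diff K) (p i - p j) <= lambda * gauge (sym_part K) (p k - p l).

Definition P_num {R : realType} {d : nat} (K : set 'rV[R]_d) (lambda : R) : \bar R :=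
  ereal_sup [set (m%:R)%:E | m in [set m : nat | exists p : 'I_m -> 'rV[R]_d, P_config K lambda p]].

Definition homothet {R : realType} {d : nat} (v : 'rV[R]_d) (lam : R)
    (A : set 'rV[R]_d) : set 'rV[R]_d :=
  [set x | exists2 y, A y & x = v + lam *: y].

From HB Require Import structures.
From mathcomp Require Import all_boot all_order all_algebra.
From mathcomp Require Import all_classical all_reals all_analysis.
Import Order.TTheory GRing.Theory Num.Theory.
Import numFieldNormedType.Exports.
Local Open Scope classical_set_scope.
Local Open Scope ring_scope.

(* If two homothets v_i + l_i K and v_j + l_j K meet, then
   v_i - v_j = l_j b - l_i a with a, b in K; shrinking both scalars to
   m = max l_i l_j (K is convex and contains o) writes v_i - v_j as
   m (b' - a') with a', b' in K, so its (K - K)/2-gauge is at most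
   2m < 2(1 + delta).  If v_i - v_j = m y with y in K and m < 1, then
   v_i = v_j + l_j ((m / l_j) y) lies in v_j + l_j int(K), since
   m / l_j < 1; hence its (K ∩ -K)-gauge is at least 1.  The centres are
   therefore a configuration witnessing P(K, 2(1 + delta)) >= |I|. *)

Section ConvexBody.
Context {R : realType} {d : nat}.
Implicit Types (K L : set 'rV[R]_d) (x y z : 'rV[R]_d).

Lemma interior0_norm_ball K :
  interior K 0 -> exists2 e : R, 0 < e & forall x, `|x| < e -> K x.
Proof.
move=> /nbhs_ballP [e e0 sub_eK]; exists e => // x x_lt.
by apply: sub_eK; rewrite -ball_normE /= sub0r normrN.
Qed.

Lemma convex_scale K (s : R) y :
  convexS K -> K 0 -> 0 <= s <= 1 -> K y -> K (s *: y).
Proof.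
move=> cK K0 /andP[s0 s1] Ky.
by have := cK _ _ s Ky K0 s0 s1; rewrite scaler0 addr0.
Qed.

(* The ball of radius (1 - t) e around t y is the convex combination of y
   with the ball of radius e around 0. *)
Lemma convex_interior_scale K (t : R) y :
  convexS K -> interior K 0 -> 0 <= t < 1 -> K y -> interior K (t *: y).
Proof.
move=> cK /interior0_norm_ball [e e0 ball_eK] /andP[t0 t1] Ky.
have t1_gt0 : 0 < 1 - t by rewrite subr_gt0.
apply/nbhs_ballP; exists ((1 - t) * e); first exact: mulr_gt0.
move=> w; rewrite -ball_normE /= => w_near.
have Ku : K ((1 - t)^-1 *: (w - t *: y)).
  apply: ball_eK; rewrite normrZ ger0_norm ?invr_ge0 ?(ltW t1_gt0) // distrC mulrC.
  by rewrite ltr_pdivrMr // mulrC.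
have := cK _ _ t Ky Ku t0 (ltW t1).
by rewrite scalerA divff ?gt_eqF // scale1r addrC subrK.
Qed.

Lemma interior_sym_part0 K : interior K 0 -> interior (sym_part K) 0.
Proof.
move=> /interior0_norm_ball [e e0 ball_eK].
apply/nbhs_ballP; exists e => // x; rewrite -ball_normE /= sub0r normrN.
by move=> x_lt; split; apply: ball_eK; rewrite ?normrN.
Qed.

Lemma gauge_le L (m : R) y : 0 < m -> L y -> gauge L (m *: y) <= m.
Proof.
move=> m0 Ly; apply: ge_inf; last by split=> //; exists y.
by exists 0 => mu [mu0 _]; exact: ltW.
Qed.

Lemma gauge_ge1 L z :
  interior L 0 -> (forall (m : R) y, 0 < m -> m < 1 -> L y -> z <> m *: y) ->
  1 <= gauge L z.
Proof.
move=> /interior0_norm_ball [e e0 ball_eL] no_shrink; apply: lb_le_inf.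
  pose m := (`|z| + 1) / e.
  have m0 : 0 < m by rewrite divr_gt0 // ltr_pwDr.
  exists m; split => //; exists (m^-1 *: z).
    apply: ball_eL; rewrite normrZ ger0_norm ?invr_ge0 ?(ltW m0) // invf_div.
    by rewrite mulrAC ltr_pdivrMr ?ltr_pwDr // ltr_pM2l // ltrDl.
  by rewrite scalerA divff ?gt_eqF ?scale1r.
move=> m [m0 [y Ly ez]]; rewrite leNgt; apply/negP => m1.
exact: (no_shrink m y m0 m1 Ly ez).
Qed.

Lemma homothet_meet_gauge_le K u w (a b : R) :
  convexS K -> K 0 -> 0 < a -> 0 < b ->
  homothet u a K `&` homothet w b K !=set0 ->
  gauge (half_diff K) (u - w) <= 2 * Num.max a b.
Proof.
move=> cK K0 a0 b0 [x [[ka Kka ->] [kb Kkb ew]]].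
set m := Num.max a b.
have m0 : 0 < m by rewrite lt_max a0.
have shrink c k : 0 < c <= m -> K k -> K ((c / m) *: k).
  move=> /andP[c0 cm] Kk; apply: convex_scale => //.
  by rewrite divr_ge0 ?(ltW c0) ?(ltW m0) //= ler_pdivrMr // mul1r.
have half_diff_ab : half_diff K (2^-1 *: ((b / m) *: kb - (a / m) *: ka)).
  by exists ((b / m) *: kb), ((a / m) *: ka); split=> //; apply: shrink;
    rewrite ?b0 ?a0 ?le_max ?lexx ?orbT.
have -> : u - w = (2 * m) *: (2^-1 *: ((b / m) *: kb - (a / m) *: ka)).
  rewrite scalerA mulrAC divff ?pnatr_eq0 // mul1r scalerBr !scalerA.
  rewrite [m * (b / m)]mulrC [m * (a / m)]mulrC !divfK ?gt_eqF //.
  have -> : u = w + b *: kb - a *: ka by rewrite -ew addrK.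
  by rewrite addrAC [w + _ - w]addrAC subrr add0r.
by apply: gauge_le; rewrite ?mulr_gt0.
Qed.

Lemma homothet_sep_gauge_ge1 K u w (b : R) :
  convexS K -> interior K 0 -> 1 <= b ->
  ~ homothet w b (interior K) u -> 1 <= gauge (sym_part K) (u - w).
Proof.
move=> cK iK0 b1 u_out; have b0 : 0 < b by apply: lt_le_trans b1.
apply: gauge_ge1; first exact: interior_sym_part0.
move=> m y m0 m1 [Ky _] e; apply: u_out; exists ((m / b) *: y).
  apply: convex_interior_scale => //; rewrite divr_ge0 ?(ltW m0) ?(ltW b0) //=.
  by rewrite ltr_pdivrMr // mul1r (lt_le_trans m1).
by rewrite scalerA mulrC divfK ?gt_eqF // -e addrC subrK.
Qed.

Lemma P_num_ge K (lambda : R) m (p : 'I_m -> 'rV[R]_d) :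
  P_config K lambda p -> ((m%:R)%:E <= P_num K lambda)%E.
Proof. by move=> Pp; apply: ereal_sup_ubound; exists m => //; exists p. Qed.

End ConvexBody.

Theorem lemma19 (R : realType) (d : nat) (K : set 'rV[R]_d) (delta : R)
    (I : Type) (v : I -> 'rV[R]_d) (lam : I -> R) :
  convex_body K -> interior K 0 -> 0 < delta ->
  (forall i j, homothet (v i) (lam i) K `&` homothet (v j) (lam j) K !=set0) ->
  (forall i j, i <> j -> ~ homothet (v j) (lam j) (interior K) (v i)) ->
  (forall i, 1 <= lam i < 1 + delta) ->
  forall (n : nat) (f : 'I_n -> I), injective f ->
    ((n%:R)%:E <= P_num K (2 * (1 + delta)))%E.
Proof.
move=> [_ cK _] iK0 delta0 meet sep lam_bd n f f_inj.
have lam_ge1 i : 1 <= lam i by case/andP: (lam_bd i).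
have lam_gt0 i : 0 < lam i by apply: lt_le_trans (lam_ge1 i).
have diam i j : gauge (half_diff K) (v i - v j) <= 2 * (1 + delta).
  have K0 : K 0 := nbhs_singleton iK0.
  apply: le_trans
    (homothet_meet_gauge_le _ _ _ _ _ cK K0 (lam_gt0 i) (lam_gt0 j) (meet i j)) _.
  rewrite ler_pM2l // ge_max.
  by case/andP: (lam_bd i) => _ /ltW ->; case/andP: (lam_bd j) => _ /ltW.
have sep_gauge i j : i <> j -> 1 <= gauge (sym_part K) (v i - v j).
  by move=> ij; apply: homothet_sep_gauge_ge1 (sep _ _ ij).
apply: (@P_num_ge _ _ _ _ _ (v \o f)); split.
  move=> a b /= vab; apply: f_inj; apply: contrapT => fab.
  by apply: (sep _ _ fab); exists 0; [exact: iK0 | rewrite scaler0 addr0].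
move=> i j k l _ kl /=; apply: le_trans (diam _ _) _.
rewrite -{1}(mulr1 (2 * (1 + delta))) ler_wpM2l
  ?mulr_ge0 ?addr_ge0 ?(ltW delta0) //.
by apply: (sep_gauge (f k) (f l)) => /f_inj/eqP; exact/negP.
Qed.
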